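(* Let $K$ be a field and $\mathcal A$ an algebraic division algebra over $K$ (e.g. an algebraic field extension of $K$), regarded as a left $\mathcal A$-module via left multiplication. Let $J$ be a $K$-subspace of $\mathcal A$ and fix any choice of $\vartheta$. (i) If $J=0$ or $J=\mathcal A$, then $\sigma_\vartheta(J)=\tau_\vartheta(J)=\mathcal A$. (ii) If $J$ is nonzero and proper, then $\sigma_\vartheta(J)=\{0\}$ and $\tau_\vartheta(J)=(\mathcal A\setminus J)\cup\{0\}$.
   Context: For an associative unital algebra $\mathcal A$ over a commutative ring (here a field $K$), the symbol $\vartheta$ ranges over ''left'', ''right'', ''pre-two-sided'', ''two-sided''. A subspace $J\subseteq\mathcal A$ is a left (resp. right; two-sided) Mathieu subspace of $\mathcal A$ if whenever $a\in\mathcal A$ satisfies $a^m\in J$ for all $m\ge1$, then for all $b,c\in\mathcal A$ there is $N_0$ with $ba^m\in J$ (resp. $a^mc\in J$; $ba^mc\in J$) for all $m\ge N_0$; pre-two-sided means both left and right. A $\vartheta$-ideal means a left/right/two-sided ideal accordingly, and a two-sided ideal for $\vartheta$ = pre-two-sided. For a left $\mathcal A$-module $\mathcal M$, $u\in\mathcal M$, $N\subseteq \mathcal M$, $(N:u)=\{a\in\mathcal A: au\in N\}$; for a subspace $N$, $\sigma_\vartheta(N)=\{u\in\mathcal M: (N:u)\text{ is a }\vartheta\text{-ideal of }\mathcal A\}$, $\tau_\vartheta(N)=\{u\in\mathcal M: (N:u)\text{ is a }\vartheta\text{-Mathieu subspace of }\mathcal A\}$. A $K$-algebra is algebraic if every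 element satisfies a nonzero polynomial over $K$. *)

From HB Require Import structures.
From mathcomp Require Import all_boot all_order all_algebra.
Set Implicit Arguments. Unset Strict Implicit. Unset Printing Implicit Defensive.
Import GRing.Theory.
Local Open Scope ring_scope.

Inductive theta := Left | Right | PreTwoSided | TwoSided.

Section Defs.
Variables (K : fieldType) (A : unitAlgType K).

Definition is_subspace (J : A -> Prop) : Prop :=
  J 0 /\ (forall x y, J x -> J y -> J (x + y)) /\ (forall (c : K) x, J x -> J (c *: x)).

Definition algebraic_alg : Prop :=
  forall a : A, exists p : {poly K}, p != 0 /\ horner_alg a p = 0.

(* division algebra: every nonzero element invertible (1 != 0 is built in) *)
Definition division_alg : Prop := forall a : A, a != 0 -> a \is a GRing.unit.

Definition left_ideal (I : A -> Prop) : Prop :=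
  is_subspace I /\ forall b x, I x -> I (b * x).
Definition right_ideal (I : A -> Prop) : Prop :=
  is_subspace I /\ forall c x, I x -> I (x * c).
Definition twosided_ideal (I : A -> Prop) : Prop :=
  is_subspace I /\ forall b c x, I x -> I (b * x * c).

Definition theta_ideal (th : theta) (I : A -> Prop) : Prop :=
  match th with
  | Left => left_ideal I
  | Right => right_ideal I
  | PreTwoSided | TwoSided => twosided_ideal I
  end.

Definition powers_in (J : A -> Prop) (a : A) : Prop := forall m : nat, (1 <= m)%N -> J (a ^+ m).

Definition left_MS (J : A -> Prop) : Prop :=
  is_subspace J /\ forall a, powers_in J a ->
    forall b, exists N0 : nat, forall m : nat, (N0 <= m)%N -> J (b * a ^+ m).
Definition right_MS (J : A -> Prop) : Prop :=
  is_subspace J /\ forall a, powers_in J a ->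
    forall c, exists N0 : nat, forall m : nat, (N0 <= m)%N -> J (a ^+ m * c).
Definition twosided_MS (J : A -> Prop) : Prop :=
  is_subspace J /\ forall a, powers_in J a ->
    forall b c, exists N0 : nat, forall m : nat, (N0 <= m)%N -> J (b * a ^+ m * c).

Definition theta_MS (th : theta) (J : A -> Prop) : Prop :=
  match th with
  | Left => left_MS J
  | Right => right_MS J
  | PreTwoSided => left_MS J /\ right_MS J
  | TwoSided => twosided_MS J
  end.

(* (N : u) for the left regular module A *)
Definition colon (N : A -> Prop) (u : A) : A -> Prop := fun a => N (a * u).

Definition sigma_th (th : theta) (N : A -> Prop) (u : A) : Prop :=
  theta_ideal th (colon N u).
Definition tau_th (th : theta) (N : A -> Prop) (u : A) : Prop :=
  theta_MS th (colon N u).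
End Defs.

(* In a division algebra the colon subspace (J : u) of a nonzero u
   is the translate J u^-1, so it is a one-sided or two-sided ideal only if it is
   0 or everything, and it contains 1 exactly when u lies in J.  The key fact is
   that, A being algebraic, a subspace I containing all positive powers of some
   a <> 0 contains 1: cancelling powers of the invertible a from an annihilating
   polynomial yields one with nonzero constant term c, and then c is a linear
   combination of positive powers of a.  Hence a subspace without 1 is
   vacuously a Mathieu subspace, while a Mathieu subspace containing 1 is all
   of A (apply the definition to a = 1). *)

From HB Require Import structures.
From mathcomp Require Import all_boot all_order all_algebra.
Import GRing.Theory.
Local Open Scope ring_scope.

Section MathieuSubspaces.
Context {K : fieldType} {A : unitAlgType K}.
Implicit Types (I J : A -> Prop) (a u x y : A).

Lemma subspaceN I x : is_subspace I -> I x -> I (- x).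
Proof. by case=> _ [_ IZ] Ix; rewrite -scaleN1r; apply: IZ. Qed.

Lemma colon_subspace J u : is_subspace J -> is_subspace (colon J u).
Proof.
case=> J0 [JD JZ]; rewrite /colon; split; first by rewrite mul0r.
split; first by move=> x y Jx Jy; rewrite mulrDl; apply: JD.
by move=> c x Jx; rewrite -scalerAl; apply: JZ.
Qed.

Lemma colon_unit_full J u :
  u \is a GRing.unit -> (forall x, colon J u x) -> forall y, J y.
Proof. by move=> uU Ju y; have := Ju (y / u); rewrite /colon mulrVK. Qed.

Lemma colon_divr {J u y} : u \is a GRing.unit -> J y -> colon J u (y / u).
Proof. by move=> uU Jy; rewrite /colon mulrVK. Qed.

Lemma colon1 J u : colon J u 1 <-> J u.
Proof. by rewrite /colon mul1r. Qed.

Lemma theta_ideal_MS_of_twosided I th :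
  is_subspace I -> (forall b c x, I x -> I (b * x * c)) ->
  theta_ideal th I /\ theta_MS th I.
Proof.
move=> hI hc.
have L : left_MS I.
  by split=> // a Ha b; exists 1%N => m m1; rewrite -[_ * _]mulr1; apply/hc/Ha.
have R : right_MS I.
  by split=> // a Ha c; exists 1%N => m m1; rewrite -[_ ^+ m]mul1r; apply/hc/Ha.
have T : twosided_MS I by split=> // a Ha b c; exists 1%N => m m1; apply/hc/Ha.
have IL : left_ideal I by split=> // b x Ix; rewrite -[_ * _]mulr1; apply: hc.
have IR : right_ideal I by split=> // c x Ix; rewrite -[x]mul1r; apply: hc.
by case: th.
Qed.

Lemma theta_ideal_unit_full {I th x} :
  theta_ideal th I -> I x -> x \is a GRing.unit -> forall y, I y.
Proof.
move=> hI Ix xU y.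
case: th hI => /= [[_ h]|[_ h]|[_ h]|[_ h]].
- by rewrite -[y]mulr1 -(mulVr xU) mulrA; apply: h.
- by rewrite -[y]mul1r -(mulrV xU) -mulrA; apply: h.
- by rewrite -[y]mul1r -(mulVr xU); apply: h.
- by rewrite -[y]mul1r -(mulVr xU); apply: h.
Qed.

Lemma theta_MS_one_full {I th} : theta_MS th I -> I 1 -> forall y, I y.
Proof.
move=> hI I1 y.
have P1 : powers_in I 1 by move=> m _; rewrite expr1n.
case: th hI => /= [[_ h]|[_ h]|[[_ h] _]|[_ h]].
- by have [N /(_ N (leqnn N))] := h 1 P1 y; rewrite expr1n mulr1.
- by have [N /(_ N (leqnn N))] := h 1 P1 y; rewrite expr1n mul1r.
- by have [N /(_ N (leqnn N))] := h 1 P1 y; rewrite expr1n mulr1.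
- by have [N /(_ N (leqnn N))] := h 1 P1 y 1; rewrite expr1n !mulr1.
Qed.

Lemma sigma_tau_colon_full J u th : is_subspace J ->
  (forall x, colon J u x) -> sigma_th th J u /\ tau_th th J u.
Proof.
move=> hJ Ju.
by apply: theta_ideal_MS_of_twosided => [|*]; [exact: colon_subspace | exact: Ju].
Qed.

Lemma sigma_tau_colon0 {J} th : is_subspace J -> sigma_th th J 0 /\ tau_th th J 0.
Proof. by move=> hJ; apply: sigma_tau_colon_full => // x; rewrite /colon mulr0; case: hJ. Qed.

Lemma sigma_tau_zero_subspace J u th : (forall a, J a <-> a = 0) ->
  u \is a GRing.unit -> sigma_th th J u /\ tau_th th J u.
Proof.
move=> J0 uU; have hJ : is_subspace J.
  split; first exact/J0.
  by split=> [x y /J0 -> /J0 ->|c x /J0 ->]; apply/J0; rewrite ?addr0 ?scaler0.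
apply: theta_ideal_MS_of_twosided => [|b c x /J0 xu]; first exact: colon_subspace.
apply/J0; suff -> : x = 0 by rewrite !(mulr0, mul0r).
by rewrite -(mulrK uU x) xu mul0r.
Qed.

Lemma not_sigma_th_proper {J u th j k} : division_alg A ->
  J j -> j != 0 -> ~ J k -> u \is a GRing.unit -> ~ sigma_th th J u.
Proof.
move=> hdiv Jj j0 Jk uU hu; have ju : j / u \is a GRing.unit.
  by rewrite unitrMr ?unitrV // hdiv.
by case: Jk; apply/(colon_unit_full J u uU)/(theta_ideal_unit_full hu (colon_divr uU Jj) ju).
Qed.

Lemma powers_in_hornerM I a (p : {poly K}) n :
  is_subspace I -> powers_in I a -> (1 <= n)%N -> I (horner_alg a p * a ^+ n).
Proof.
case=> I0 [ID IZ] Ha; elim/poly_ind: p n => [|p c IHp] n n1.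
  by rewrite rmorph0 mul0r.
rewrite rmorphD rmorphM /= horner_algX horner_algC mulrDl -mulrA -exprS.
by apply: ID; [exact: IHp | rewrite -scalerAl mul1r; apply/IZ/Ha].
Qed.

Section DivisionAlgebraic.
Hypotheses (hdiv : division_alg A) (halg : algebraic_alg A).

Lemma powers_in_one I a : is_subspace I -> a != 0 -> powers_in I a -> I 1.
Proof.
move=> hI a0 Ha; have aU : a \is a GRing.unit := hdiv _ a0.
have [p [p0 pa]] := halg a.
elim/poly_ind: p p0 pa => [|p c IHp] p0 pa; first by rewrite eqxx in p0.
have [c0 | c0] := eqVneq c 0.
  move: p0 pa; rewrite c0 addr0 rmorphM /= horner_algX => p0 pa.
  apply: IHp; first by apply: contraNneq p0 => ->; rewrite mul0r.
  by rewrite -(mulrK aU (horner_alg a p)) pa mul0r.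
move: pa; rewrite rmorphD rmorphM /= horner_algX horner_algC => /eqP.
rewrite addr_eq0 => /eqP pa.
have Ic : I c%:A.
  rewrite -[c%:A]opprK -pa; apply: subspaceN => //.
  by have := powers_in_hornerM I a p 1 hI Ha (leqnn 1); rewrite expr1.
case: hI => _ [_ /(_ c^-1 _ Ic)]; by rewrite scalerA mulVf // scale1r.
Qed.

Lemma theta_MS_without_one I th : is_subspace I -> ~ I 1 -> theta_MS th I.
Proof.
move=> hI I1.
have Ha0 a : powers_in I a -> a = 0.
  move=> Ha; apply/eqP; apply: contraT => a0.
  by case: I1; exact: powers_in_one a0 Ha.
have I0 : I 0 by case: hI.
have Hm m : (1 <= m)%N -> (0 : A) ^+ m = 0 by rewrite expr0n => /gtn_eqF ->.
have L : left_MS I.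
  by split=> // a /Ha0 -> b; exists 1%N => m /Hm ->; rewrite mulr0.
have R : right_MS I.
  by split=> // a /Ha0 -> c; exists 1%N => m /Hm ->; rewrite mul0r.
have T : twosided_MS I.
  by split=> // a /Ha0 -> b c; exists 1%N => m /Hm ->; rewrite mulr0 mul0r.
by case: th.
Qed.

Lemma tau_th_unitE {J u th k} : is_subspace J -> ~ J k ->
  u \is a GRing.unit -> tau_th th J u <-> ~ J u.
Proof.
move=> hJ Jk uU; split=> [hu Ju | Ju].
  by case: Jk; apply/(colon_unit_full J u uU)/(theta_MS_one_full hu)/colon1.
by apply: theta_MS_without_one (colon_subspace _ _ hJ) _ => /colon1.
Qed.

End DivisionAlgebraic.
End MathieuSubspaces.

Theorem corollary4p6 (K : fieldType) (A : unitAlgType K)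
  (hdiv : division_alg A) (halg : algebraic_alg A)
  (J : A -> Prop) (hJ : is_subspace J) (th : theta) :
  (((forall a, J a <-> a = 0) \/ (forall a, J a)) ->
     forall u : A, sigma_th th J u /\ tau_th th J u)
  /\
  ((exists a, J a /\ a <> 0) -> (exists a, ~ J a) ->
     forall u : A, (sigma_th th J u <-> u = 0) /\ (tau_th th J u <-> (~ J u \/ u = 0))).
Proof.
split=> [[J0 | JT] u | [j [Jj /eqP j0]] [k Jk] u].
- have [-> | u0] := eqVneq u 0; first exact: sigma_tau_colon0.
  exact: sigma_tau_zero_subspace (hdiv _ u0).
- by apply: sigma_tau_colon_full => // x; exact: JT.
have [-> | u0] := eqVneq u 0.
  by have [? ?] := sigma_tau_colon0 th hJ; do 2!split=> //; right.
have uU := hdiv _ u0; have tauE := tau_th_unitE hdiv halg (th := th) hJ Jk uU.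
split; first split=> [hs | u_eq0].
- by case: (not_sigma_th_proper hdiv Jj j0 Jk uU hs).
- by rewrite u_eq0 eqxx in u0.
split=> [/tauE Ju | [/tauE // | u_eq0]]; first by left.
by rewrite u_eq0 eqxx in u0.
Qed.
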